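(* In the setting below, the map $\phi:\bigoplus_{i=1}^nF_i\to H_1(\Gamma,\rho^\beta)$ is equivariant for the natural action of $u_k$ on the target, where $u_k$ acts on the source trivially on $F_i$ for $i\neq k$ and by multiplication by $\chi=\beta^T$ on $F_k$. Moreover $\phi$ is injective.
   Context: Setting: $Q=\{q_1,\ldots,q_n\}\subset\mathbb{P}^1$, $b,c$ further points; $\Gamma=\pi_1(\mathbb{P}^1-Q-\{c\},b)$ with generators $\alpha_i$ (around $q_i$), $\delta$ (around $c$), relation $\delta\alpha_1\cdots\alpha_n=1$; $\delta_1=\delta$, $\delta_{i+1}=\alpha_i\delta_i\alpha_i^{-1}$; $u_k$ acts on $\Gamma$ by $\mu_k$ with $\mu_k(\alpha_i)=\alpha_i$ ($i\ne k$), $\mu_k(\alpha_k)=\delta_k^{-1}\alpha_k\delta_k$, $\mu_k(\delta_k)=\delta_k^{-1}\alpha_k^{-1}\delta_k\alpha_k\delta_k$. $\rho:\Gamma\to GL(V)$ with $\rho(\delta)=1$ and semisimple $\rho(\alpha_i)$; $\beta^{H_i},\beta^T\in\mathbb{C}^*$ with $\beta^T\prod\beta^{H_i}=1$ and $\beta^T\ne1$; $\rho^\beta(\alpha_i)=\beta^{H_i}\rho(\alpha_i)$, $\rho^\beta(\delta)=\beta^T$. $C_1/\partial C_2$: span of $G[\gamma,w]$, linear in $w$, with $G[\xi\gamma,w]=G[\gamma,w]+G[\xi,\rho^\beta(\gamma)w]$; $H_1(\Gamma,\rho^\beta)=\ker(\partial:G[\gamma,w]\mapsto\rho^\beta(\gamma)w-w)$;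 natural action $G[\gamma,w]\mapsto G[\mu_k(\gamma),w]$. $F_i\subset V$ is the space of vectors fixed by $\rho^\beta(\alpha_i)$, and $\phi_i(f)=G[\alpha_i,f]$, $\phi=\sum\phi_i$. *)

From HB Require Import structures.
From mathcomp Require Import all_boot all_order all_algebra.
From mathcomp Require Export complex.
From mathcomp Require Export reals.
Set Implicit Arguments. Unset Strict Implicit. Unset Printing Implicit Defensive.
Import GRing.Theory.
Local Open Scope ring_scope.

(* The fundamental group Gamma = pi_1(P^1 - Q - {c}, b): the free group    *)
(* on alpha_1, ..., alpha_n (here indexed by 'I_n, i.e. 0-based), with     *)
(* delta := (alpha_1 ... alpha_n)^{-1}, so that delta alpha_1...alpha_n=1. *)
(* Elements are freely reduced words; a letter (i, false) is alpha_i and   *)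
(* (i, true) is alpha_i^{-1}.                                              *)

Definition letter (n : nat) := ('I_n * bool)%type.
Definition flipl n (x : letter n) : letter n := (x.1, ~~ x.2).
Definition nocancel n (x y : letter n) := y != flipl x.
Definition reducedw n (w : seq (letter n)) := sorted (@nocancel n) w.

Definition fcons n (x : letter n) (w : seq (letter n)) :=
  if w is y :: w' then (if y == flipl x then w' else x :: w) else [:: x].

Lemma fcons_red n (x : letter n) w : reducedw w -> reducedw (fcons x w).
Proof.
case: w => [|y w] //= H.
case: ifP => Hy; first exact: (path_sorted H).
by rewrite /reducedw /= /nocancel Hy H.
Qed.

Definition fmulw n (u v : seq (letter n)) := foldr (@fcons n) v u.

Lemma fmulw_red n (u v : seq (letter n)) : reducedw v -> reducedw (fmulw u v).
Proof. by elim: u => [|x u IH] //= Hv; apply: fcons_red; apply: IH. Qed.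

Definition FG (n : nat) := {w : seq (letter n) | reducedw w}.

Definition FGmul n (u v : FG n) : FG n :=
  exist _ (fmulw (sval u) (sval v)) (fmulw_red (sval u) (svalP v)).
Definition FGone n : FG n := exist _ [::] (erefl true).
Definition FGgen n (x : letter n) : FG n := exist _ [:: x] (erefl true).
Definition FGinv n (g : FG n) : FG n :=
  foldr (fun x acc => FGmul acc (FGgen (flipl x))) (FGone n) (sval g).

Definition FGextend n (f : letter n -> FG n) (g : FG n) : FG n :=
  foldr (fun x acc => FGmul (f x) acc) (FGone n) (sval g).

Definition alpha n (i : 'I_n) : FG n := FGgen (i, false).
Definition alphaN n (j : nat) : FG n :=
  if (insub j : option 'I_n) is Some i then alpha i else FGone n.

Definition delta n : FG n :=
  FGinv (foldr (fun i acc => FGmul (alpha i) acc) (FGone n) (enum 'I_n)).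

(* deltaN j = delta_{j+1} in the paper: delta_1 = delta,
   delta_{i+1} = alpha_i delta_i alpha_i^{-1}  (0-based: alphaN j = alpha_{j+1}) *)
Fixpoint deltaN n (j : nat) : FG n :=
  if j is j'.+1 then FGmul (FGmul (alphaN n j') (deltaN n j')) (FGinv (alphaN n j'))
  else delta n.

Definition mu n (k : 'I_n) : FG n -> FG n :=
  FGextend (fun x : letter n =>
    let a := if x.1 == k
             then FGmul (FGmul (FGinv (deltaN n k)) (alpha k)) (deltaN n k)
             else alpha x.1 in
    if x.2 then FGinv a else a).

(* rho^beta : Gamma -> GL(V), V = 'cV_m, determined by
   rho^beta(alpha_i) = bH i * A i, where A i = rho(alpha_i). *)
Definition rhob (C : fieldType) n m (A : 'I_n -> 'M[C]_m) (bH : 'I_n -> C)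
  (g : FG n) : 'M[C]_m :=
  foldr (fun x acc =>
     let B := bH x.1 *: A x.1 in (if x.2 then invmx B else B) *m acc)
    1%:M (sval g).

Definition rhoG (C : fieldType) n m (A : 'I_n -> 'M[C]_m) (g : FG n) : 'M[C]_m :=
  rhob A (fun _ => 1) g.

(* C_1 / d C_2 : the span of symbols G[gamma, w], linear in w, subject to  *)
(* G[xi gamma, w] = G[gamma, w] + G[xi, rho^beta(gamma) w]; we describe it *)
(* by its universal property (M, G).                                       *)

Definition C1_rel (C : fieldType) n m (rb : FG n -> 'M[C]_m) (M : lmodType C)
  (G : FG n -> 'cV[C]_m -> M) : Prop :=
  (forall g, linear (G g)) /\
  (forall xi ga w, G (FGmul xi ga) w = G ga w + G xi (rb ga *m w)).

Definition C1_quotient (C : fieldType) n m (rb : FG n -> 'M[C]_m) (M : lmodType C)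
  (G : FG n -> 'cV[C]_m -> M) : Prop :=
  [/\ C1_rel rb G,
      (forall (M' : lmodType C) (G' : FG n -> 'cV[C]_m -> M'), C1_rel rb G' ->
          exists h : M -> M', linear h /\ forall g w, h (G g w) = G' g w)
    & (forall (M' : lmodType C) (h1 h2 : M -> M'), linear h1 -> linear h2 ->
          (forall g w, h1 (G g w) = h2 (G g w)) -> forall x, h1 x = h2 x)].

(* elements of the direct sum of the F_i, F_i = fixed vectors of rho^beta(alpha_i) *)
Definition in_sumF (C : fieldType) n m (rb : FG n -> 'M[C]_m)
  (f : 'I_n -> 'cV[C]_m) : Prop :=
  forall i, rb (alpha i) *m f i = f i.

Definition phi (C : fieldType) n m (M : lmodType C) (G : FG n -> 'cV[C]_m -> M)
  (f : 'I_n -> 'cV[C]_m) : M :=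
  \sum_(i < n) G (alpha i) (f i).

Definition src_act (C : fieldType) n m (k : 'I_n) (chi : C)
  (f : 'I_n -> 'cV[C]_m) : 'I_n -> 'cV[C]_m :=
  fun i => if i == k then chi *: f i else f i.

From HB Require Import structures.
From mathcomp Require Import all_boot all_order all_algebra complex reals.
From mathcomp Require Import boolp.
Set Implicit Arguments. Unset Strict Implicit. Unset Printing Implicit Defensive.
Import GRing.Theory.
Local Open Scope ring_scope.

(* Since rho(delta) = 1 and beta^T prod_i beta^{H_i} = 1, rho^beta(delta) is
   the scalar beta^T, hence so is rho^beta(delta_k), a conjugate of delta.  For
   f fixed by rho^beta(alpha_k), the defining relation of C_1/dC_2 then gives
   G[delta_k^-1 alpha_k delta_k, f] = beta^T G[alpha_k, f].  For injectivity,
   the Fox derivative d/d alpha_j twisted by rho^beta satisfies the same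
   relations, so the universal property yields a linear map sending
   G[alpha_i, f] to f if i = j and to 0 otherwise: it reads off the j-th
   component of phi(f). *)

Section FreeGroup.
Variable n : nat.
Implicit Types (x : letter n) (u v w : seq (letter n)) (g : FG n).

Lemma flipK : involutive (@flipl n).
Proof. by case=> i b; rewrite /flipl /= negbK. Qed.

Lemma fcons_flipK x w : reducedw w -> fcons x (fcons (flipl x) w) = w.
Proof.
case: w => [|y w] /=; first by rewrite eqxx.
case: ifP => [/eqP|_ _]; last by rewrite /= eqxx.
rewrite flipK => <-; case: w => [|z w] //= /andP[Hz _].
by rewrite (negbTE Hz).
Qed.

Lemma fmulw0 w : reducedw w -> fmulw w [::] = w.
Proof.
elim: w => [|x w IH] //= Hw; rewrite IH; last exact: path_sorted Hw.
by case: w Hw {IH} => [|y w] //= /andP[Hy _]; rewrite (negbTE Hy).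
Qed.

Lemma fmulw_fcons x u v : reducedw u -> reducedw v ->
  fmulw (fcons x u) v = fcons x (fmulw u v).
Proof.
case: u => [|y u] //= Hu Hv; case: ifP => // /eqP ->.
by rewrite fcons_flipK //; apply: fmulw_red.
Qed.

Lemma fmulwA u v w : reducedw v -> reducedw w ->
  fmulw (fmulw u v) w = fmulw u (fmulw v w).
Proof.
move=> Hv Hw; elim: u => [|x u IH] //=.
by rewrite fmulw_fcons ?IH //; apply: fmulw_red.
Qed.

Definition invw w := rev (map (@flipl n) w).

Lemma fmulw_invwK u v : reducedw v -> fmulw (invw u) (fmulw u v) = v.
Proof.
move=> Hv; elim: u => [|x u IH] //=.
rewrite /invw map_cons rev_cons -cats1 /fmulw foldr_cat /= -{2}(flipK x).
by rewrite fcons_flipK ?IH //; apply: fmulw_red.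
Qed.

Lemma FGinv_val g : sval (FGinv g) = fmulw (invw (sval g)) [::].
Proof.
rewrite /FGinv; elim: (sval g) => [|x w IH] //=.
by rewrite IH fmulwA // /invw map_cons rev_cons -cats1 /fmulw foldr_cat.
Qed.

Lemma FGmulg1 g : FGmul g (FGone n) = g.
Proof. by case: g => w Hw; apply: val_inj; apply: fmulw0. Qed.

Lemma FGmulVg g : FGmul (FGinv g) g = FGone n.
Proof.
apply: val_inj; case: g => w Hw; rewrite /= FGinv_val fmulwA //.
by rewrite -{2}(fmulw0 Hw) fmulw_invwK.
Qed.

End FreeGroup.

Section RhoBeta.
Variables (K : fieldType) (n m : nat) (A : 'I_n -> 'M[K]_m) (bH : 'I_n -> K).
Hypothesis unit_bHA : forall i, bH i *: A i \in unitmx.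
Implicit Types (x : letter n) (u v w : seq (letter n)) (g h : FG n).

Definition rho_letter x :=
  let B := bH x.1 *: A x.1 in if x.2 then invmx B else B.
Definition rhow w := foldr (fun x acc => rho_letter x *m acc) 1%:M w.

Lemma rho_letter_flip x : rho_letter x *m rho_letter (flipl x) = 1%:M.
Proof. by case: x => i [] /=; rewrite /rho_letter /= ?mulVmx ?mulmxV. Qed.

Lemma rhow_fcons x w : rhow (fcons x w) = rho_letter x *m rhow w.
Proof.
case: w => [|y w] //=; case: ifP => // /eqP ->.
by rewrite mulmxA rho_letter_flip mul1mx.
Qed.

Lemma rhow_fmulw u v : rhow (fmulw u v) = rhow u *m rhow v.
Proof.
elim: u => [|x u IH] /=; first by rewrite mul1mx.
by rewrite rhow_fcons IH mulmxA.
Qed.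

Lemma rhob_mul g h : rhob A bH (FGmul g h) = rhob A bH g *m rhob A bH h.
Proof. exact: rhow_fmulw. Qed.

Lemma rhob_invl g : rhob A bH (FGinv g) *m rhob A bH g = 1%:M.
Proof. by rewrite -rhob_mul FGmulVg. Qed.

Lemma rhob_invr g : rhob A bH g *m rhob A bH (FGinv g) = 1%:M.
Proof. exact: mulmx1C (rhob_invl g). Qed.

Lemma rhob_alpha i : rhob A bH (alpha i) = bH i *: A i.
Proof. exact: mulmx1. Qed.

Variable j : 'I_n.

(* The Fox derivative d/d alpha_j, composed with rho^beta and written for the
   convention G[xi gamma, w] = G[gamma, w] + G[xi, rho^beta(gamma) w]. *)
Definition fox_letter x : 'M[K]_m :=
  (x.1 == j)%:R *: (if x.2 then - rho_letter x else 1%:M).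
Fixpoint foxw w : 'M[K]_m :=
  if w is x :: w' then foxw w' + fox_letter x *m rhow w' else 0.

Lemma fox_letter_flip x :
  fox_letter (flipl x) + fox_letter x *m rho_letter (flipl x) = 0.
Proof.
case: x => i [] /=; rewrite /fox_letter /rho_letter /=.
  by rewrite -scalemxAl mulNmx mulVmx // scalerN subrr.
by rewrite scalemx1 mul_scalar_mx scalerN addNr.
Qed.

Lemma foxw_fcons x w : foxw (fcons x w) = foxw (x :: w).
Proof.
case: w => [|y w] //=; case: ifP => // /eqP ->.
by rewrite -addrA mulmxA -mulmxDl fox_letter_flip mul0mx addr0.
Qed.

Lemma foxw_fmulw u v : foxw (fmulw u v) = foxw v + foxw u *m rhow v.
Proof.
elim: u => [|x u IH] /=; first by rewrite mul0mx addr0.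
by rewrite foxw_fcons /= IH rhow_fmulw mulmxDl addrA mulmxA.
Qed.

Lemma foxw_alpha i : foxw (sval (alpha i)) = (i == j)%:R%:M.
Proof. by rewrite /= add0r mulmx1 /fox_letter /= scalemx1. Qed.

Lemma C1_rel_fox :
  C1_rel (rhob A bH) (fun g (y : 'cV[K]_m) => foxw (sval g) *m y).
Proof.
split=> [g a u v|xi ga w]; first by rewrite mulmxDr scalemxAr.
by rewrite /= foxw_fmulw mulmxDl -mulmxA.
Qed.

End RhoBeta.

Section RhoBetaDelta.
Variables (K : fieldType) (n m : nat) (A : 'I_n -> 'M[K]_m) (bH : 'I_n -> K).
Variable bT : K.
Hypothesis unitA : forall i, A i \in unitmx.
Hypothesis unit_bHA : forall i, bH i *: A i \in unitmx.
Hypothesis rhoG_delta : rhoG A (delta n) = 1%:M.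
Hypothesis bT_prod : bT * \prod_(i < n) bH i = 1.

Definition alpha_prod (s : seq 'I_n) : FG n :=
  foldr (fun i acc => FGmul (alpha i) acc) (FGone n) s.

Lemma rhob_alpha_prod s :
  rhob A bH (alpha_prod s) = (\prod_(i <- s) bH i) *: rhoG A (alpha_prod s).
Proof.
have unit1A i : (fun=> 1) i *: A i \in unitmx by rewrite scale1r.
elim: s => [|i s IH] /=; first by rewrite big_nil scale1r.
rewrite /rhoG !rhob_mul // IH !rhob_alpha scale1r big_cons.
by rewrite -scalemxAl -scalemxAr scalerA.
Qed.

Lemma rhob_delta : rhob A bH (delta n) = bT%:M.
Proof.
have unit1A i : (fun=> 1) i *: A i \in unitmx by rewrite scale1r.
pose P := alpha_prod (enum 'I_n).
have rhoG_P : rhoG A P = 1%:M.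
  by have := rhob_invl unit1A P; rewrite -/(rhoG A _) rhoG_delta mul1mx.
have rhob_P : rhob A bH P = (\prod_(i < n) bH i)%:M.
  by rewrite rhob_alpha_prod rhoG_P big_enum scalemx1.
have [_ unitP] := mulmx1_unit (rhob_invl unit_bHA P).
apply: (can_inj (mulmxK unitP)); rewrite /= rhob_invl //.
by rewrite rhob_P -scalar_mxM bT_prod.
Qed.

Lemma rhob_deltaN k : rhob A bH (deltaN n k) = bT%:M.
Proof.
elim: k => [|k IH] /=; first exact: rhob_delta.
rewrite !rhob_mul // IH scalar_mxC -mulmxA rhob_invr //.
by rewrite mul_scalar_mx scalemx1.
Qed.

End RhoBetaDelta.

Section PlainLinear.
Variables (R : pzRingType) (U V : lmodType R) (f : U -> V).
Hypothesis linf : linear f.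

Let fL : {linear U -> V} :=
  HB.pack f (GRing.isLinear.Build R U V *:%R f linf).

Lemma linear_fun_sum k (F : 'I_k -> U) :
  f (\sum_(i < k) F i) = \sum_(i < k) f (F i).
Proof. exact: (linear_sum fL). Qed.

Lemma linear_funZ a u : f (a *: u) = a *: f u.
Proof. exact: (linearZZ fL). Qed.

End PlainLinear.

Lemma mu_alpha n (k i : 'I_n) :
  mu k (alpha i) =
  if i == k then FGmul (FGmul (FGinv (deltaN n k)) (alpha k)) (deltaN n k)
  else alpha i.
Proof. exact: FGmulg1. Qed.

Section PhiMap.
Variables (K : fieldType) (n m : nat) (rb : FG n -> 'M[K]_m).
Variables (M : lmodType K) (G : FG n -> 'cV[K]_m -> M).

Lemma phi_cycle (d : M -> 'cV[K]_m) f : linear d ->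
  (forall g w, d (G g w) = rb g *m w - w) -> in_sumF rb f -> d (phi G f) = 0.
Proof.
move=> lind dG Ff; rewrite /phi linear_fun_sum //.
by apply: big1 => i _; rewrite dG Ff subrr.
Qed.

Hypothesis rb1 : rb (FGone n) = 1%:M.
Hypothesis relG : C1_rel rb G.

Lemma C1_one w : G (FGone n) w = 0.
Proof.
have := relG.2 (FGone n) (FGone n) w.
rewrite FGmulg1 rb1 mul1mx => /(congr1 (fun z => z - G (FGone n) w)).
by rewrite subrr addrK.
Qed.

Lemma C1_conj_scalar h g c w : rb h = c%:M -> rb g *m w = w ->
  G (FGmul (FGmul (FGinv h) g) h) w = c *: G g w.
Proof.
move=> rb_h Fw.
have cancel_h : G h w + G (FGinv h) (c *: w) = 0.
  by rewrite -mul_scalar_mx -rb_h -relG.2 FGmulVg C1_one.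
rewrite !relG.2 rb_h mul_scalar_mx -scalemxAr Fw (linear_funZ (relG.1 _)).
by rewrite addrCA cancel_h addr0.
Qed.

Lemma phi_mu k (U : M -> M) c f : linear U ->
  (forall g w, U (G g w) = G (mu k g) w) -> rb (deltaN n k) = c%:M ->
  in_sumF rb f -> U (phi G f) = phi G (src_act k c f).
Proof.
move=> linU UG rb_delta Ff; rewrite /phi linear_fun_sum //.
apply: eq_bigr => i _; rewrite UG mu_alpha /src_act.
case: eqP => [->|//].
by rewrite (linear_funZ (relG.1 _)); apply: C1_conj_scalar.
Qed.

End PhiMap.

Lemma phi_inj (K : fieldType) n m (A : 'I_n -> 'M[K]_m) (bH : 'I_n -> K)
    (M : lmodType K) (G : FG n -> 'cV[K]_m -> M) :
  (forall i, bH i *: A i \in unitmx) -> C1_quotient (rhob A bH) G ->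
  injective (phi G).
Proof.
move=> unit_bHA [_ univG _] f f' eq_phi; apply: funext => j.
have [h [linh hG]] := univG _ _ (C1_rel_fox unit_bHA j).
have phi_coord g : h (phi G g) = g j.
  rewrite /phi linear_fun_sum // (bigD1 j) //= big1 ?addr0 => [|i ij].
    by rewrite hG foxw_alpha eqxx mul1mx.
  by rewrite hG foxw_alpha (negbTE ij) mul_scalar_mx scale0r.
by rewrite -phi_coord eq_phi phi_coord.
Qed.

Unset Implicit Arguments.

Theorem lemma4p9 (R : realType) (n m : nat)
  (A : 'I_n -> 'M[R[i]]_m) (bH : 'I_n -> R[i]) (bT : R[i])
  (M : lmodType R[i]) (G : FG n -> 'cV[R[i]]_m -> M) :
  (forall i, A i \in unitmx) ->
  (forall i, diagonalizable (A i)) ->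
  rhoG A (delta n) = 1%:M ->
  (forall i, bH i != 0) -> bT != 0 ->
  bT * \prod_(i < n) bH i = 1 ->
  bT != 1 ->
  C1_quotient (rhob A bH) G ->
  (* phi lands in H_1 = ker d *)
  (forall d : M -> 'cV[R[i]]_m, linear d ->
     (forall g w, d (G g w) = rhob A bH g *m w - w) ->
     forall f, in_sumF (rhob A bH) f -> d (phi G f) = 0)
  /\
  (* equivariance for u_k *)
  (forall (k : 'I_n) (U : M -> M), linear U ->
     (forall g w, U (G g w) = G (mu k g) w) ->
     forall f, in_sumF (rhob A bH) f -> U (phi G f) = phi G (src_act k bT f))
  /\
  (* injectivity *)
  (forall f f', in_sumF (rhob A bH) f -> in_sumF (rhob A bH) f' ->
     phi G f = phi G f' -> f = f').
Proof.
move=> unitA _ rhoG_delta bH_neq0 _ bT_prod _ quotG.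
have unit_bHA i : bH i *: A i \in unitmx by rewrite unitmxZ ?unitfE.
have [relG _ _] := quotG.
split=> [d linD dG f|]; first exact: (phi_cycle linD dG).
split=> [k U linU UG f|f f' _ _]; last exact: (phi_inj unit_bHA quotG).
have rhob_delta_k := rhob_deltaN unitA unit_bHA rhoG_delta bT_prod k.
exact: (phi_mu (erefl _) relG linU UG rhob_delta_k).
Qed.
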